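(* Let $N\ge 1$ be an integer, let $\mathbf{h}_{s},\mathbf{h}_{b}\in\mathbb{C}^{N\times 1}$ be nonzero vectors, and set $\mathbf{H}_{s}=\mathbf{h}_{s}\mathbf{h}_{s}^H$ and $\mathbf{H}_{b}=\mathbf{h}_{b}\mathbf{h}_{b}^H$. Let $N^{no}>0$, $\Gamma_{s,0}>0$ and $\Gamma_{b,0}>0$ be real constants. Consider the semidefinite program $$\min_{\mathbf{W}_{s},\mathbf{W}_{b}} \ \operatorname{Tr}(\mathbf{W}_{s})+\operatorname{Tr}(\mathbf{W}_{b})$$ over $N\times N$ Hermitian matrices $\mathbf{W}_{s},\mathbf{W}_{b}$, subject to $$\operatorname{Tr}(\mathbf{H}_{s}\mathbf{W}_{s})\ge N^{no}\Gamma_{s,0},$$ $$\operatorname{Tr}(\mathbf{H}_{s}\mathbf{W}_{b})\ge \Gamma_{b,0}\operatorname{Tr}(\mathbf{H}_{s}\mathbf{W}_{s})+N^{no}\Gamma_{b,0},$$ $$\operatorname{Tr}(\mathbf{H}_{b}\mathbf{W}_{b})\ge \Gamma_{b,0}\operatorname{Tr}(\mathbf{H}_{b}\mathbf{W}_{s})+N^{no}\Gamma_{b,0},$$ $$\mathbf{W}_{s}\succeq 0,\qquad \mathbf{W}_{b}\succeq 0.$$ Then this problem has an optimal solution $(\mathbf{W}_{s}^{*},\mathbf{W}_{b}^{*})$ with $\operatorname{rank}(\mathbf{W}_{s}^{*})=\operatorname{rank}(\mathbf{W}_{b}^{*})=1$.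
   Context: This is the semidefinite relaxation (rank-one constraints dropped) of the per-cluster NOMA-period power minimization in a downlink multi-antenna system: the base station has $N$ antennas and serves, in a cluster, a semantic user with channel $\mathbf{h}_{s}$ and a bit-based user with channel $\mathbf{h}_{b}$ using beamformers $\mathbf{w}_s,\mathbf{w}_b$, with $\mathbf{W}_s=\mathbf{w}_s\mathbf{w}_s^H$, $\mathbf{W}_b=\mathbf{w}_b\mathbf{w}_b^H$. Here $N^{no}=B^{no}N_0$ is the noise power (bandwidth times noise power spectral density), $\Gamma_{s,0}$ is the SNR threshold required by the semantic user, and $\Gamma_{b,0}=2^{R_0/B^{no}}-1$ is the SINR threshold of the bit-based user. $\mathbf{A}\succeq 0$ means $\mathbf{A}$ is positive semidefinite. *)

From HB Require Import structures.
From mathcomp Require Import all_boot all_order all_algebra.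
From mathcomp Require Import reals complex.
Set Implicit Arguments. Unset Strict Implicit. Unset Printing Implicit Defensive.
Import Order.TTheory GRing.Theory Num.Theory.
Local Open Scope ring_scope.

Section SDP.
Variable C : numClosedFieldType.

Definition ctrmx m n (A : 'M[C]_(m, n)) : 'M[C]_(n, m) := (map_mx Num.conj A)^T.

Definition hermmx n (A : 'M[C]_n) : Prop := ctrmx A = A.

Definition psdmx n (A : 'M[C]_n) : Prop :=
  hermmx A /\ forall x : 'cV[C]_n, 0 <= (ctrmx x *m A *m x) 0 0.

(* feasible set of the relaxed per-cluster NOMA power minimization SDP,
   with Hs = hs hs^H, Hb = hb hb^H, Nno = noise power, Gs = Gamma_{s,0},
   Gb = Gamma_{b,0} (all constants embedded as (real) elements of C) *)
Definition sdp_feasible n (Hs Hb : 'M[C]_n) (Nno Gs Gb : C) (Ws Wb : 'M[C]_n) : Prop :=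
  [/\ hermmx Ws, hermmx Wb,
      Nno * Gs <= \tr (Hs *m Ws),
      Gb * \tr (Hs *m Ws) + Nno * Gb <= \tr (Hs *m Wb) &
      [/\ Gb * \tr (Hb *m Ws) + Nno * Gb <= \tr (Hb *m Wb),
      psdmx Ws & psdmx Wb]].

Definition sdp_optimal n (Hs Hb : 'M[C]_n) (Nno Gs Gb : C) (Ws Wb : 'M[C]_n) : Prop :=
  sdp_feasible Hs Hb Nno Gs Gb Ws Wb /\
  forall Vs Vb : 'M[C]_n, sdp_feasible Hs Hb Nno Gs Gb Vs Vb ->
    \tr Ws + \tr Wb <= \tr Vs + \tr Vb.

End SDP.

(* All data of the program see a positive semidefinite W only through the
   sesquilinear form of W on span(hs, hb).  Write hs = sg e1 and
   hb = c e1 + be e2 with (e1, e2) orthonormal (e2 = 0 when hb is parallel to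
   hs), and put al = |c|.  For W >= 0 let t1, t2 be the square roots of
   e1^H W e1 and e2^H W e2: then hs^H W hs = (sg t1)^2, Cauchy-Schwarz for the
   form of W gives (al t1 - be t2)^2 <= hb^H W hb <= (al t1 + be t2)^2, and
   t1^2 + t2^2 <= Tr W.  Conversely, w = r1 e1 + r2 om e2, with om the phase of
   conj c, gives a rank-one w w^H with hs^H (w w^H) hs = (sg r1)^2,
   hb^H (w w^H) hb = (al r1 + be r2)^2 and trace at most r1^2 + r2^2.  So the
   program reduces to a problem in four real variables, whose feasible set is
   closed and nonempty; a point of it nearest to the origin exists by
   compactness and gives rank-one optimal beamformers. *)

From HB Require Import structures.
From mathcomp Require Import all_boot all_order all_algebra.
From mathcomp Require Import reals complex.
From mathcomp Require Import classical_sets topology normedtype derive matrix_normedtype.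
From mathcomp Require Import ring lra.
Import Order.TTheory GRing.Theory Num.Theory.
Set Implicit Arguments.
Unset Strict Implicit.
Unset Printing Implicit Defensive.

Local Open Scope ring_scope.

Section ConjugateTranspose.
Context {C : numClosedFieldType}.

Lemma ctrmxK m n (A : 'M[C]_(m, n)) : ctrmx (ctrmx A) = A.
Proof. by apply/matrixP => i j; rewrite !mxE conjCK. Qed.

Lemma ctrmxM m n p (A : 'M[C]_(m, n)) (B : 'M[C]_(n, p)) :
  ctrmx (A *m B) = ctrmx B *m ctrmx A.
Proof. by rewrite /ctrmx map_mxM trmx_mul. Qed.

Lemma ctrmxD m n (A B : 'M[C]_(m, n)) : ctrmx (A + B) = ctrmx A + ctrmx B.
Proof. by apply/matrixP => i j; rewrite !mxE rmorphD. Qed.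

Lemma ctrmxB m n (A B : 'M[C]_(m, n)) : ctrmx (A - B) = ctrmx A - ctrmx B.
Proof. by apply/matrixP => i j; rewrite !mxE rmorphB. Qed.

Lemma ctrmxZ m n a (A : 'M[C]_(m, n)) : ctrmx (a *: A) = a^* *: ctrmx A.
Proof. by apply/matrixP => i j; rewrite !mxE rmorphM. Qed.

Lemma ctrmx1 n : ctrmx (1%:M : 'M[C]_n) = 1%:M.
Proof. by apply/matrixP => i j; rewrite !mxE rmorph_nat eq_sym. Qed.

End ConjugateTranspose.

Section SesquilinearForms.
Context {C : numClosedFieldType} {n : nat}.
Implicit Types (x y z : 'cV[C]_n) (W : 'M[C]_n).

Definition inprod x y : C := (ctrmx x *m y) 0 0.
Definition mxform W x y : C := (ctrmx x *m W *m y) 0 0.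

Lemma inprodE x y : inprod x y = \sum_i (x i 0)^* * y i 0.
Proof. by rewrite /inprod !mxE; apply: eq_bigr => i _; rewrite !mxE. Qed.

Lemma inprod_ge0 x : 0 <= inprod x x.
Proof. by rewrite inprodE sumr_ge0 // => i _; rewrite mulrC mul_conjC_ge0. Qed.

Lemma inprod0r x : inprod x 0 = 0.
Proof. by rewrite /inprod mulmx0 mxE. Qed.

Lemma inprod_eq0 x : (inprod x x == 0) = (x == 0).
Proof.
apply/idP/eqP => [|->]; last by rewrite inprod0r.
rewrite inprodE psumr_eq0 => [/allP x0|i _]; last by rewrite mulrC mul_conjC_ge0.
apply/matrixP => i j; rewrite (ord1 j) mxE.
have /implyP/(_ isT) := x0 i (mem_index_enum i).
by rewrite mulrC mul_conjC_eq0 => /eqP.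
Qed.

Lemma inprodC x y : inprod y x = (inprod x y)^*.
Proof.
by rewrite !inprodE rmorph_sum; apply: eq_bigr => i _; rewrite rmorphM /= conjCK mulrC.
Qed.

Lemma inprodDl x y z : inprod (x + y) z = inprod x z + inprod y z.
Proof. by rewrite /inprod ctrmxD mulmxDl mxE. Qed.

Lemma inprodDr x y z : inprod x (y + z) = inprod x y + inprod x z.
Proof. by rewrite /inprod mulmxDr mxE. Qed.

Lemma inprodZl a x y : inprod (a *: x) y = a^* * inprod x y.
Proof. by rewrite /inprod ctrmxZ -scalemxAl mxE. Qed.

Lemma inprodZr a x y : inprod x (a *: y) = a * inprod x y.
Proof. by rewrite /inprod -scalemxAr mxE. Qed.

Lemma inprodBr x y z : inprod x (y - z) = inprod x y - inprod x z.
Proof. by rewrite -mulN1r -scaleN1r inprodDr inprodZr. Qed.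

Lemma mxformDl W x y z : mxform W (x + y) z = mxform W x z + mxform W y z.
Proof. by rewrite /mxform ctrmxD !mulmxDl mxE. Qed.

Lemma mxformDr W x y z : mxform W x (y + z) = mxform W x y + mxform W x z.
Proof. by rewrite /mxform mulmxDr mxE. Qed.

Lemma mxformZl W a x y : mxform W (a *: x) y = a^* * mxform W x y.
Proof. by rewrite /mxform ctrmxZ -!scalemxAl mxE. Qed.

Lemma mxformZr W a x y : mxform W x (a *: y) = a * mxform W x y.
Proof. by rewrite /mxform -scalemxAr mxE. Qed.

Lemma mxformC W x y : hermmx W -> mxform W y x = (mxform W x y)^*.
Proof.
move=> hW; rewrite /mxform.
have -> : ctrmx y *m W *m x = ctrmx (ctrmx x *m W *m y).
  by rewrite !ctrmxM ctrmxK hW mulmxA.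
by rewrite !mxE.
Qed.

Lemma mxform_comb W a b x y : hermmx W ->
  mxform W (a *: x + b *: y) (a *: x + b *: y) =
  a^* * a * mxform W x x + a^* * b * mxform W x y
  + b^* * a * (mxform W x y)^* + b^* * b * mxform W y y.
Proof.
move=> hW; rewrite !(mxformDl, mxformDr, mxformZl, mxformZr) (mxformC _ y hW).
ring.
Qed.

End SesquilinearForms.

Section PositiveSemidefinite.
Context {C : numClosedFieldType} {n : nat}.
Implicit Types (x y u w : 'cV[C]_n) (W Q : 'M[C]_n).

Lemma psdmx_form_ge0 W x : psdmx W -> 0 <= mxform W x x.
Proof. by case=> _; apply. Qed.

Lemma psdmx_CauchySchwarz W x y : psdmx W ->
  `|mxform W x y| ^+ 2 <= mxform W x x * mxform W y y.
Proof.
move=> psdW; have [hW _] := psdW.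
have [a_ge0 b_ge0] := (psdmx_form_ge0 x psdW, psdmx_form_ge0 y psdW).
move: a_ge0 b_ge0 (fun s t => mxform_comb s t x y hW); rewrite normCK.
set a := mxform W x x; set b := mxform W y y; set c := mxform W x y.
move=> a_ge0 b_ge0 combE.
have comb s t : 0 <= s^* * s * a + s^* * t * c + t^* * s * c^* + t^* * t * b.
  by rewrite -combE psdmx_form_ge0.
(* Positivity on [b x - c^* y] gives [b (a b - |c|^2) >= 0], on [- c x + a y]
   gives [a (a b - |c|^2) >= 0], and on [x - c^* y] it forces [c = 0] when
   [a = b = 0]. *)
have scaled s : 0 < s -> 0 <= s * (a * b - c * c^*) -> c * c^* <= a * b.
  by move=> s_gt0; rewrite pmulr_rge0 // subr_ge0.
have [b_gt0|] := boolP (0 < b).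
  apply: (scaled b b_gt0); have := comb b (- c^*).
  by rewrite (geC0_conj b_ge0) rmorphN /= conjCK; congr (0 <= _); ring.
rewrite lt_def b_ge0 andbT negbK => /eqP b0.
have [a_gt0|] := boolP (0 < a).
  apply: (scaled a a_gt0); have := comb (- c) a.
  by rewrite (geC0_conj a_ge0) rmorphN; congr (0 <= _); ring.
rewrite lt_def a_ge0 andbT negbK => /eqP a0.
rewrite a0 b0 mul0r; have := comb 1 (- c^*); rewrite a0 b0 rmorph1 rmorphN /= conjCK.
have -> : 1 * 1 * 0 + 1 * - c^* * c + - c * 1 * c^* + - c * - c^* * 0 = - (c * c^*) *+ 2.
  by ring.
by rewrite pmulrn_lge0 // oppr_ge0.
Qed.

Lemma psdmx1 m : psdmx (1%:M : 'M[C]_m).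
Proof. by split=> [|x]; rewrite ?/hermmx ?ctrmx1 // mulmx1 inprod_ge0. Qed.

Lemma psdmx_congr m p (W : 'M[C]_m) (A : 'M[C]_(m, p)) :
  psdmx W -> psdmx (ctrmx A *m W *m A).
Proof.
case=> hW W_ge0; split=> [|x]; first by rewrite /hermmx !ctrmxM ctrmxK hW mulmxA.
by have := W_ge0 (A *m x); rewrite ctrmxM !mulmxA.
Qed.

Lemma mxtrace_psd_ge0 W : psdmx W -> 0 <= \tr W.
Proof.
move=> psdW; rewrite /mxtrace sumr_ge0 // => i _.
have := psdmx_form_ge0 (delta_mx i 0) psdW; rewrite /mxform.
have -> : ctrmx (delta_mx i 0 : 'cV[C]_n) = delta_mx 0 i.
  by apply/matrixP => a b; rewrite !mxE rmorph_nat andbC.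
by rewrite -rowE -colE !mxE.
Qed.

Lemma mxtrace_proj_le W Q : psdmx W -> hermmx Q -> Q *m Q = Q ->
  \tr (Q *m W) <= \tr W.
Proof.
(* [tr W - tr (Q W) = tr (P^H W P)] for the projection [P = 1 - Q]. *)
move=> psdW hQ idQ; set P := 1%:M - Q.
have hP : ctrmx P = P by rewrite ctrmxB ctrmx1 hQ.
have idP : P *m P = P by rewrite mulmxBl mul1mx mulmxBr mulmx1 idQ subrr subr0.
have := mxtrace_psd_ge0 (psdmx_congr P psdW).
by rewrite hP mxtrace_mulC mulmxA idP mulmxBl mul1mx raddfB /= subr_ge0.
Qed.

Lemma rank1_mul u x y w :
  (u *m ctrmx x) *m (y *m ctrmx w) = inprod x y *: (u *m ctrmx w).
Proof.
by rewrite mulmxA -(mulmxA u) [ctrmx x *m y]mx11_scalar mul_mx_scalar scalemxAl.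
Qed.

Lemma mxtrace_rank1 w : \tr (w *m ctrmx w) = inprod w w.
Proof. by rewrite mxtrace_mulC trace_mx11. Qed.

Lemma mxtrace_rank1_mul u W : \tr (u *m ctrmx u *m W) = mxform W u u.
Proof. by rewrite -mulmxA mxtrace_mulC trace_mx11. Qed.

Lemma mxform_rank1 w x : mxform (w *m ctrmx w) x x = inprod x w * (inprod x w)^*.
Proof.
rewrite /mxform !mulmxA [ctrmx x *m w]mx11_scalar mul_scalar_mx -scalemxAl mxE.
by rewrite -inprodC.
Qed.

Lemma psdmx_rank1 w : psdmx (w *m ctrmx w).
Proof. by have := psdmx_congr (ctrmx w) (psdmx1 1); rewrite ctrmxK mulmx1. Qed.

Lemma mxrank_rank1 w : w != 0 -> \rank (w *m ctrmx w) = 1%N.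
Proof.
move=> w_neq0; apply/eqP.
rewrite eqn_leq (leq_trans (mxrankM_maxl _ _)) ?rank_leq_col //.
rewrite lt0n mxrank_eq0; apply: contraNneq w_neq0 => w0.
by rewrite -inprod_eq0 -mxtrace_rank1 w0 mxtrace0.
Qed.

Lemma mxtrace_orthonormal2_le W e1 e2 : psdmx W ->
    inprod e1 e1 = 1 -> inprod e1 e2 = 0 -> e2 = 0 \/ inprod e2 e2 = 1 ->
  mxform W e1 e1 + mxform W e2 e2 <= \tr W.
Proof.
move=> psdW e1_unit e12 e2_unit.
rewrite -!mxtrace_rank1_mul -mxtraceD -mulmxDl.
apply: mxtrace_proj_le => //; first by rewrite /hermmx ctrmxD !ctrmxM !ctrmxK.
have e22 : inprod e2 e2 *: (e2 *m ctrmx e2) = e2 *m ctrmx e2.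
  by case: e2_unit => [->|->]; rewrite ?scale1r // mul0mx scaler0.
rewrite mulmxDl !mulmxDr !rank1_mul e1_unit e12 inprodC e12 e22.
by rewrite conjC0 !scale0r scale1r addr0 add0r.
Qed.

End PositiveSemidefinite.

Section Phase.
Context {C : numClosedFieldType}.

(* [phase 0 = 1] rather than [0], so that a phase always has modulus one. *)
Definition phase (z : C) : C := if z == 0 then 1 else z / `|z|.

Lemma phaseK z : `|z| * phase z = z.
Proof.
rewrite /phase; case: eqP => [->|/eqP z_neq0]; first by rewrite normr0 mul0r.
by rewrite mulrC divfK ?normr_eq0.
Qed.

Lemma phase_unit z : phase z * (phase z)^* = 1.
Proof.
rewrite /phase; case: eqP => [_|/eqP z_neq0]; first by rewrite rmorph1 mulr1.
have nz_neq0 : `|z| != 0 by rewrite normr_eq0.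
rewrite rmorphM rmorphV ?unitfE //= conj_normC mulrACA -normCK -invfM -expr2.
by rewrite mulfV // expf_neq0.
Qed.

End Phase.

Section ComplexVectors.
Context {R : realType} {n : nat}.
Local Notation C := R[i].
Local Notation "x %:C" := (real_complex R x) : ring_scope.
Implicit Types (x y : 'cV[C]_n) (V : 'M[C]_n).

Lemma conj_realc (r : R) : r%:C^* = r%:C.
Proof. exact: conjc_real. Qed.

Definition sqrtRe (z : C) : R := Num.sqrt (complex.Re z).

Lemma sqrtReK (z : C) : 0 <= z -> (sqrtRe z ^+ 2)%:C = z.
Proof.
move=> z_ge0; have zE := RRe_real (ger0_real z_ge0).
by rewrite sqr_sqrtr ?zE // -ler0c zE.
Qed.

Definition vnorm x : R := sqrtRe (inprod x x).

Lemma inprod_vnorm x : inprod x x = (vnorm x ^+ 2)%:C.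
Proof. by rewrite sqrtReK // inprod_ge0. Qed.

Lemma vnorm_eq0 x : (vnorm x == 0) = (x == 0).
Proof.
rewrite -inprod_eq0 inprod_vnorm -(rmorph0 (real_complex R)).
by rewrite (inj_eq (@complexI R)) sqrf_eq0.
Qed.

(* [normalize 0 = 0], since [0^-1 = 0]. *)
Definition normalize x := (vnorm x)^-1%:C *: x.

Lemma normalizeK x : (vnorm x)%:C *: normalize x = x.
Proof.
have [->|x_neq0] := eqVneq x 0; first by rewrite /normalize !scaler0.
by rewrite scalerA -rmorphM mulfV ?rmorph1 ?scale1r // vnorm_eq0.
Qed.

Lemma normalize_unit x : x != 0 -> inprod (normalize x) (normalize x) = 1.
Proof.
rewrite -vnorm_eq0 => v_neq0.
rewrite inprodZl inprodZr conj_realc inprod_vnorm -!rmorphM.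
by rewrite mulrA -expr2 -exprMn mulVf // expr1n rmorph1.
Qed.

Definition psd_norm V x : R := sqrtRe (mxform V x x).

Lemma mxform_psd_norm V x : psdmx V -> mxform V x x = (psd_norm V x ^+ 2)%:C.
Proof. by move=> psdV; rewrite sqrtReK // psdmx_form_ge0. Qed.

Lemma norm_mxform_le V x y : psdmx V ->
  complex.Re `|mxform V x y| <= psd_norm V x * psd_norm V y.
Proof.
move=> psdV; have := psdmx_CauchySchwarz x y psdV.
rewrite !mxform_psd_norm // -rmorphM -exprMn.
rewrite -(RRe_real (ger0_real (normr_ge0 (mxform V x y)))) -rmorphXn lecR.
by rewrite ler_sqr ?nnegrE ?mulr_ge0 ?sqrtr_ge0 // -ler0c RRe_real ?ger0_real.
Qed.

Lemma mxform_comb_bounds V x y (a : C) (b : R) : psdmx V -> 0 <= b ->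
  let t1 := psd_norm V x in let t2 := psd_norm V y in let al := complex.Re `|a| in
  ((al * t1 - b * t2) ^+ 2)%:C <= mxform V (a *: x + b%:C *: y) (a *: x + b%:C *: y) /\
  mxform V (a *: x + b%:C *: y) (a *: x + b%:C *: y) <= ((al * t1 + b * t2) ^+ 2)%:C.
Proof.
move=> psdV b_ge0 t1 t2 al; have [hV _] := psdV.
have alE : al%:C = `|a| := RRe_real (ger0_real (normr_ge0 a)).
set z := a^* * mxform V x y.
have formE : mxform V (a *: x + b%:C *: y) (a *: x + b%:C *: y) =
    (al ^+ 2 * t1 ^+ 2 + b * (2 * complex.Re z) + b ^+ 2 * t2 ^+ 2)%:C.
  have zE : z + z^* = (2 * complex.Re z)%:C by rewrite addcJ rmorphM rmorph_nat.
  have aE : a^* * a = (al ^+ 2)%:C by rewrite -normCKC -alE rmorphXn.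
  rewrite mxform_comb // !mxform_psd_norm // -/t1 -/t2.
  transitivity
    ((al ^+ 2)%:C * (t1 ^+ 2)%:C + b%:C * (z + z^*) + (b ^+ 2)%:C * (t2 ^+ 2)%:C).
    have zJ : z^* = a * (mxform V x y)^* by rewrite rmorphM /= conjCK.
    by rewrite -aE zJ /z conj_realc rmorphXn; ring.
  by rewrite zE -!rmorphM -!rmorphD.
have Rez_le : `|complex.Re z| <= al * (t1 * t2).
  have al_ge0 : 0 <= al by rewrite -ler0c alE.
  have mE := RRe_real (ger0_real (normr_ge0 (mxform V x y))).
  rewrite -lecR; apply: le_trans (normc_ge_Re z) _.
  rewrite /z normrM norm_conjC -alE -mE -rmorphM lecR ler_wpM2l //.
  exact: norm_mxform_le.
move: Rez_le; rewrite formE !lecR ler_norml => /andP[lo hi]; split; nra.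
Qed.

End ComplexVectors.

Section MinimumNorm.
Import numFieldNormedType.Exports.
Local Open Scope classical_set_scope.
Context {R : realType}.

Definition sqnorm n (x : 'rV[R]_n) : R := \sum_i x ord0 i ^+ 2.

Lemma sqnorm_continuous n : continuous (fun x : 'rV[R]_n => sqnorm x).
Proof.
apply: continuous_big => [|i _]; first exact: add_continuous.
by move=> x; apply: continuousM; exact: coord_continuous.
Qed.

Lemma closed_min_sqnorm n (A : set 'rV[R]_n) : closed A -> A !=set0 ->
  exists2 c, A c & forall x, A x -> sqnorm c <= sqnorm x.
Proof.
move=> A_closed [x0 Ax0]; set M := sqnorm x0.
set K := A `&` [set x | sqnorm x <= M].
have K_closed : closed K.
  apply: closedI A_closed _.
  apply: (@preimage_closed _ _ (@sqnorm n) [set y | y <= M]); last exact: closed_le.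
  by move=> x _; exact: sqnorm_continuous.
set box := [set x : 'rV[R]_n | forall i, `[- (M + 1), M + 1]%classic (x ord0 i)].
have K_box : K `<=` box.
  move=> x [_ xM] i; rewrite /= in_itv /=.
  have : x ord0 i ^+ 2 <= M.
    apply: le_trans xM; rewrite /sqnorm (bigD1 i) //= lerDl.
    by rewrite sumr_ge0 // => j _; exact: sqr_ge0.
  by move=> xiM; apply/andP; split; nra.
have box_compact : compact box.
  by apply: (@rV_compact _ _ (fun=> _)) => i; exact: segment_compact.
have K_compact : compact K := subclosed_compact K_closed box_compact K_box.
have K0 : K !=set0 by exists x0; split => /=.
have [c /[!inE] -[Ac cM] c_min] :=
  EVT_min_rV K0 K_compact (continuous_subspaceT (@sqnorm_continuous n)).
exists c => // x Ax; have [xM|/ltW Mx] := leP (sqnorm x) M.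
  by apply: c_min; rewrite inE.
exact: le_trans cM Mx.
Qed.

End MinimumNorm.

Section ContinuousPolynomial.
Import numFieldNormedType.Exports.
Local Open Scope classical_set_scope.
Context {R : realType} {n : nat}.
Implicit Types f g : 'rV[R]_n -> R.

Lemma continuous_add f g : continuous f -> continuous g -> continuous (fun x => f x + g x).
Proof. by move=> cf cg x; exact: continuousD (cf x) (cg x). Qed.

Lemma continuous_mul f g : continuous f -> continuous g -> continuous (fun x => f x * g x).
Proof. by move=> cf cg x; exact: continuousM (cf x) (cg x). Qed.

Lemma continuous_sqr f : continuous f -> continuous (fun x => f x ^+ 2).
Proof. by move=> cf; exact: continuous_mul. Qed.

Lemma closed_fun_le f g : continuous f -> continuous g -> closed [set x | f x <= g x].
Proof.
move=> cf cg.
have -> : [set x | f x <= g x] = (fun x => g x - f x) @^-1` [set y | 0 <= y].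
  by apply/seteqP; split=> x /=; rewrite subr_ge0.
apply: (@preimage_closed _ _ (fun x => g x - f x) [set y | 0 <= y]); last exact: closed_ge.
by move=> x _; exact: continuousB (cg x) (cf x).
Qed.

End ContinuousPolynomial.

Ltac continuous_poly := repeat first
  [ apply: continuous_add | apply: continuous_sqr | apply: continuous_mul
  | exact: cst_continuous | exact: coord_continuous ].

Section ReducedProblem.
Import numFieldNormedType.Exports.
Local Open Scope classical_set_scope.
Context {R : realType}.
Variables (sg al be Nno Gs Gb : R).

(* [(s1, s2)] and [(b1, b2)] are the coordinates of the semantic and the
   bit-based beamformer in the basis [(e1, om e2)] of [beam] below. *)
Definition reduced_feasible (s1 s2 b1 b2 : R) : Prop :=
  [/\ Nno * Gs <= (sg * s1) ^+ 2, Gb * (sg * s1) ^+ 2 + Nno * Gb <= (sg * b1) ^+ 2 &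
      Gb * (al * s1 + be * s2) ^+ 2 + Nno * Gb <= (al * b1 + be * b2) ^+ 2].

Lemma reduced_feasible_neq0 s1 s2 b1 b2 : 0 < Nno -> 0 < Gs -> 0 < Gb ->
  reduced_feasible s1 s2 b1 b2 -> s1 != 0 /\ b1 != 0.
Proof.
move=> Nno_gt0 Gs_gt0 Gb_gt0 [c1 c2 _]; split; apply: contraTneq isT => x0.
  by move: c1; rewrite x0 mulr0 expr0n /= leNgt mulr_gt0.
move: c2; rewrite x0 mulr0 expr0n /= leNgt ltr_pwDr ?mulr_gt0 //.
by rewrite mulr_ge0 ?sqr_ge0 ?ltW.
Qed.

Lemma exists_sqr_ge (d u : R) : d != 0 ->
  exists k, forall k', k <= k' -> u <= (d * k') ^+ 2.
Proof.
move=> d_neq0; have d2_gt0 : 0 < d ^+ 2 by rewrite exprn_even_gt0.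
exists (`|u| / d ^+ 2 + 1) => k; set w := `|u| / d ^+ 2 => wk.
have w_ge0 : 0 <= w by rewrite divr_ge0 // sqr_ge0.
have w_le : w <= k ^+ 2 by nra.
apply: le_trans (ler_norm u) _.
by rewrite -(divfK (lt0r_neq0 d2_gt0) `|u|) -/w exprMn mulrC ler_wpM2l ?sqr_ge0.
Qed.

Lemma reduced_feasible_nonempty : sg != 0 -> al + be != 0 ->
  exists s1 s2 b1 b2, reduced_feasible s1 s2 b1 b2.
Proof.
move=> sg_neq0 ab_neq0.
have [s1 s1_ge] := exists_sqr_ge (Nno * Gs) sg_neq0.
have [k2 k2_ge] := exists_sqr_ge (Gb * (sg * s1) ^+ 2 + Nno * Gb) sg_neq0.
have [k3 k3_ge] := exists_sqr_ge (Gb * (al * s1) ^+ 2 + Nno * Gb) ab_neq0.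
pose b := Num.max k2 k3.
exists s1, 0, b, b; split; first exact: s1_ge.
- by apply: k2_ge; rewrite le_max lexx.
- by rewrite mulr0 addr0 -mulrDl; apply: k3_ge; rewrite le_max lexx orbT.
Qed.

Lemma reduced_feasible_closed :
  closed [set x : 'rV[R]_4 | reduced_feasible (x ord0 0) (x ord0 1) (x ord0 2) (x ord0 3)].
Proof.
rewrite (_ : [set x | _] = [set x : 'rV[R]_4 | Nno * Gs <= (sg * x ord0 0) ^+ 2]
  `&` [set x | Gb * (sg * x ord0 0) ^+ 2 + Nno * Gb <= (sg * x ord0 2) ^+ 2]
  `&` [set x | Gb * (al * x ord0 0 + be * x ord0 1) ^+ 2 + Nno * Gb
               <= (al * x ord0 2 + be * x ord0 3) ^+ 2]); last first.
  by apply/seteqP; split=> x /=; [case|case=> -[]].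
by apply: closedI; first apply: closedI; apply: closed_fun_le; continuous_poly.
Qed.

Definition vec4 (s1 s2 b1 b2 : R) : 'rV[R]_4 := \row_i [:: s1; s2; b1; b2]`_i.

Lemma vec4E (s1 s2 b1 b2 : R) (x := vec4 s1 s2 b1 b2) :
  [/\ x ord0 0 = s1, x ord0 1 = s2, x ord0 2 = b1 & x ord0 3 = b2].
Proof. by rewrite /x !mxE. Qed.

Lemma sqnorm4 (x : 'rV[R]_4) :
  sqnorm x = x ord0 0 ^+ 2 + x ord0 1 ^+ 2 + x ord0 2 ^+ 2 + x ord0 3 ^+ 2.
Proof.
rewrite /sqnorm !big_ord_recl big_ord0 addr0 !addrA.
by congr (_ + _ + _ + _); congr (x ord0 _ ^+ 2); apply: val_inj.
Qed.

Lemma reduced_optimum : sg != 0 -> al + be != 0 ->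
  exists s1 s2 b1 b2, reduced_feasible s1 s2 b1 b2 /\
    forall t1 t2 d1 d2, reduced_feasible t1 t2 d1 d2 ->
      s1 ^+ 2 + s2 ^+ 2 + b1 ^+ 2 + b2 ^+ 2 <= t1 ^+ 2 + t2 ^+ 2 + d1 ^+ 2 + d2 ^+ 2.
Proof.
move=> sg_neq0 ab_neq0.
set F := [set x : 'rV[R]_4 | reduced_feasible (x ord0 0) (x ord0 1) (x ord0 2) (x ord0 3)].
have F0 : F !=set0.
  have [s1 [s2 [b1 [b2 feas]]]] := reduced_feasible_nonempty sg_neq0 ab_neq0.
  by exists (vec4 s1 s2 b1 b2); rewrite /F /=; have [-> -> -> ->] := vec4E s1 s2 b1 b2.
have [c Fc c_min] := closed_min_sqnorm reduced_feasible_closed F0.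
exists (c ord0 0), (c ord0 1), (c ord0 2), (c ord0 3); split=> // t1 t2 d1 d2 feas.
have := c_min (vec4 t1 t2 d1 d2); rewrite /F /= !sqnorm4.
by case: (vec4E t1 t2 d1 d2) => -> -> -> ->; apply.
Qed.

End ReducedProblem.

Section ChannelDecomposition.
Context {R : realType} {N : nat}.
Local Notation C := R[i].
Local Notation "x %:C" := (real_complex R x) : ring_scope.
Variables hs hb : 'cV[C]_N.
Hypothesis hs_neq0 : hs != 0.

Let e1 := normalize hs.
Let c := inprod e1 hb.
Let f := hb - c *: e1.
Let e2 := normalize f.
Let om := phase c^*.

Definition hs_gain := vnorm hs.
Definition hb_par := complex.Re `|c|.
Definition hb_perp := vnorm f.
Definition beam (r1 r2 : R) := r1%:C *: e1 + (r2%:C * om) *: e2.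

Lemma hs_gain_neq0 : hs_gain != 0.
Proof. by rewrite vnorm_eq0. Qed.

Lemma e1_unit : inprod e1 e1 = 1.
Proof. exact: normalize_unit. Qed.

Lemma e12 : inprod e1 e2 = 0.
Proof.
by rewrite /e2 /normalize inprodZr /f inprodBr inprodZr e1_unit mulr1 subrr mulr0.
Qed.

Lemma e21 : inprod e2 e1 = 0.
Proof. by rewrite inprodC e12 conjC0. Qed.

Lemma e2_cases : (e2 = 0 /\ hb_perp = 0) \/ inprod e2 e2 = 1.
Proof.
have [f0|f_neq0] := eqVneq f 0; last by right; exact: normalize_unit.
left; rewrite /e2 /hb_perp /normalize f0 scaler0.
by split=> //; apply/eqP; rewrite vnorm_eq0.
Qed.

Lemma hs_decomp : hs = hs_gain%:C *: e1.
Proof. by rewrite normalizeK. Qed.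

Lemma hb_decomp : hb = c *: e1 + hb_perp%:C *: e2.
Proof. by rewrite normalizeK /f addrC subrK. Qed.

Lemma hb_par_ge0 : 0 <= hb_par.
Proof. by rewrite -ler0c RRe_real ?ger0_real. Qed.

Lemma hb_par_perp_neq0 : hb != 0 -> hb_par + hb_perp != 0.
Proof.
apply: contraNneq => /eqP; rewrite paddr_eq0 ?hb_par_ge0 ?sqrtr_ge0 //.
case/andP; rewrite /hb_par => /eqP par0 /eqP perp0.
have c0 : c = 0.
  by apply/eqP; rewrite -normr_eq0 -(RRe_real (ger0_real (normr_ge0 c))) par0 rmorph0.
by rewrite hb_decomp c0 perp0 rmorph0 !scale0r addr0.
Qed.

Lemma conj_c : c^* = hb_par%:C * om.
Proof. by rewrite RRe_real ?ger0_real // -norm_conjC phaseK. Qed.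

Lemma inprod_e1_beam r1 r2 : inprod e1 (beam r1 r2) = r1%:C.
Proof.
rewrite /beam inprodDr (inprodZr _ _ e1) (inprodZr _ _ e2).
by rewrite e1_unit e12 mulr1 mulr0 addr0.
Qed.

Lemma inprod_hs_beam r1 r2 : inprod hs (beam r1 r2) = (hs_gain * r1)%:C.
Proof. by rewrite {1}hs_decomp inprodZl conj_realc inprod_e1_beam rmorphM. Qed.

Lemma inprod_hb_beam r1 r2 :
  inprod hb (beam r1 r2) = om * (hb_par * r1 + hb_perp * r2)%:C.
Proof.
have perpE : hb_perp%:C * inprod e2 e2 = hb_perp%:C.
  by case: e2_cases => [[_ ->]|->]; rewrite ?rmorph0 ?mul0r ?mulr1.
rewrite {1}hb_decomp inprodDl (inprodZl _ e1) (inprodZl _ e2) inprod_e1_beam.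
rewrite conj_c conj_realc /beam inprodDr (inprodZr _ _ e1) (inprodZr _ _ e2) e21.
rewrite mulr0 add0r rmorphD !rmorphM.
by rewrite mulrCA -[X in _ + X]mulrA perpE; ring.
Qed.

Lemma mxform_hs_beam r1 r2 :
  mxform (beam r1 r2 *m ctrmx (beam r1 r2)) hs hs = ((hs_gain * r1) ^+ 2)%:C.
Proof. by rewrite mxform_rank1 inprod_hs_beam conj_realc -rmorphM expr2. Qed.

Lemma mxform_hb_beam r1 r2 :
  mxform (beam r1 r2 *m ctrmx (beam r1 r2)) hb hb =
  ((hb_par * r1 + hb_perp * r2) ^+ 2)%:C.
Proof.
rewrite mxform_rank1 inprod_hb_beam rmorphM /= conj_realc mulrACA phase_unit mul1r.
by rewrite -rmorphM expr2.
Qed.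

Lemma mxtrace_beam_le r1 r2 :
  \tr (beam r1 r2 *m ctrmx (beam r1 r2)) <= (r1 ^+ 2 + r2 ^+ 2)%:C.
Proof.
rewrite mxtrace_rank1 {1}/beam inprodDl (inprodZl _ e1) (inprodZl _ e2).
rewrite inprod_e1_beam conj_realc inprodDr (inprodZr _ _ e1) (inprodZr _ _ e2) e21.
rewrite mulr0 add0r rmorphM /= conj_realc.
have -> : r2%:C * om^* * (r2%:C * om * inprod e2 e2) =
          (r2 ^+ 2)%:C * (om * om^*) * inprod e2 e2 by rewrite rmorphXn; ring.
rewrite phase_unit mulr1 -rmorphM -expr2 rmorphD lerD2l.
by case: e2_cases => [[-> _]|->]; rewrite ?mulr1 // inprod0r mulr0 ler0c sqr_ge0.
Qed.

Lemma beam_neq0 r1 r2 : r1 != 0 -> beam r1 r2 != 0.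
Proof.
apply: contra_neq => b0; have := inprod_e1_beam r1 r2.
rewrite b0 inprod0r => /esym/eqP.
by rewrite -(rmorph0 (real_complex R)) (inj_eq (@complexI R)) => /eqP.
Qed.

Lemma psdmx_reduce V : psdmx V -> exists t1 t2 : R,
  [/\ mxform V hs hs = ((hs_gain * t1) ^+ 2)%:C,
      ((hb_par * t1 - hb_perp * t2) ^+ 2)%:C <= mxform V hb hb,
      mxform V hb hb <= ((hb_par * t1 + hb_perp * t2) ^+ 2)%:C &
      (t1 ^+ 2 + t2 ^+ 2)%:C <= \tr V].
Proof.
move=> psdV; exists (psd_norm V e1), (psd_norm V e2).
have [lo hi] := mxform_comb_bounds e1 e2 c psdV (sqrtr_ge0 _ : 0 <= hb_perp).
split; rewrite ?hb_decomp //.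
- rewrite {1 2}hs_decomp mxformZl mxformZr conj_realc mxform_psd_norm //.
  by rewrite -!rmorphM exprMn mulrA -expr2.
- rewrite (_ : _%:C = mxform V e1 e1 + mxform V e2 e2); last first.
    by rewrite !mxform_psd_norm // rmorphD.
  apply: mxtrace_orthonormal2_le => //; [exact: e1_unit | exact: e12 |].
  by case: e2_cases => [[? _]|?]; [left|right].
Qed.

Variables Nno Gs Gb : R.
Hypothesis Gb_ge0 : 0 <= Gb.
Local Notation Hs := (hs *m ctrmx hs).
Local Notation Hb := (hb *m ctrmx hb).
Local Notation feasible := (reduced_feasible hs_gain hb_par hb_perp Nno Gs Gb).

Lemma sdp_feasible_beam s1 s2 b1 b2 : feasible s1 s2 b1 b2 ->
  sdp_feasible Hs Hb Nno%:C Gs%:C Gb%:C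
    (beam s1 s2 *m ctrmx (beam s1 s2)) (beam b1 b2 *m ctrmx (beam b1 b2)).
Proof.
case=> c1 c2 c3; have [hs_herm _] := psdmx_rank1 (beam s1 s2).
have [hb_herm _] := psdmx_rank1 (beam b1 b2).
split=> //; last split; try exact: psdmx_rank1;
  by rewrite !mxtrace_rank1_mul ?mxform_hs_beam ?mxform_hb_beam -?rmorphM -?rmorphD lecR.
Qed.

Lemma sdp_feasible_reduce Vs Vb : sdp_feasible Hs Hb Nno%:C Gs%:C Gb%:C Vs Vb ->
  exists t1 t2 d1 d2, feasible t1 t2 d1 d2 /\
    (t1 ^+ 2 + t2 ^+ 2 + d1 ^+ 2 + d2 ^+ 2)%:C <= \tr Vs + \tr Vb.
Proof.
case=> _ _ + + [+ psdVs psdVb]; rewrite !mxtrace_rank1_mul => c1 c2 c3.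
have [t1 [t2 [hsVs hbVs _ trVs]]] := psdmx_reduce psdVs.
have [d1 [d2 [hsVb _ hbVb trVb]]] := psdmx_reduce psdVb.
(* Flipping the sign of [t2] puts the lower bound on [hb^H Vs hb] in the shape
   of [reduced_feasible]. *)
exists t1, (- t2), d1, d2; split; last first.
  by rewrite sqrrN -addrA rmorphD lerD.
split.
- by move: c1; rewrite hsVs -rmorphM lecR.
- by move: c2; rewrite hsVs hsVb -!rmorphM -rmorphD lecR.
- rewrite -lecR; apply: le_trans hbVb; apply: le_trans c3.
  by rewrite rmorphD (rmorphM _ Nno) lerD2r (rmorphM _ Gb) ler_wpM2l ?ler0c // mulrN.
Qed.

Lemma sdp_optimal_beam s1 s2 b1 b2 : feasible s1 s2 b1 b2 ->
    (forall t1 t2 d1 d2, feasible t1 t2 d1 d2 ->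
      s1 ^+ 2 + s2 ^+ 2 + b1 ^+ 2 + b2 ^+ 2 <= t1 ^+ 2 + t2 ^+ 2 + d1 ^+ 2 + d2 ^+ 2) ->
  sdp_optimal Hs Hb Nno%:C Gs%:C Gb%:C
    (beam s1 s2 *m ctrmx (beam s1 s2)) (beam b1 b2 *m ctrmx (beam b1 b2)).
Proof.
move=> feas opt; split; first exact: sdp_feasible_beam.
move=> Vs Vb /sdp_feasible_reduce [t1 [t2 [d1 [d2 [feas_t tr_le]]]]].
apply: le_trans (lerD (mxtrace_beam_le s1 s2) (mxtrace_beam_le b1 b2)) _.
by apply: le_trans tr_le; rewrite -rmorphD lecR !addrA; exact: opt.
Qed.

End ChannelDecomposition.

Theorem proposition1 (R : realType) (N : nat) (hN : (0 < N)%N)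
  (hs hb : 'cV[R[i]]_N) (hs0 : hs != 0) (hb0 : hb != 0)
  (Nno Gs Gb : R) (HNno : 0 < Nno) (HGs : 0 < Gs) (HGb : 0 < Gb) :
  let Hs := hs *m ctrmx hs in
  let Hb := hb *m ctrmx hb in
  exists Ws Wb : 'M[R[i]]_N,
    sdp_optimal Hs Hb (real_complex R Nno) (real_complex R Gs) (real_complex R Gb) Ws Wb
    /\ \rank Ws = 1%N /\ \rank Wb = 1%N.
Proof.
move=> Hs Hb.
have [s1 [s2 [b1 [b2 [feas opt]]]]] :=
  reduced_optimum Nno Gs Gb (hs_gain_neq0 hs0) (hb_par_perp_neq0 hs hb0).
have optimal := sdp_optimal_beam hs0 (ltW HGb) feas opt.
have [s1_neq0 b1_neq0] := reduced_feasible_neq0 HNno HGs HGb feas.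
exists (beam hs hb s1 s2 *m ctrmx (beam hs hb s1 s2)),
       (beam hs hb b1 b2 *m ctrmx (beam hs hb b1 b2)).
by split=> //; split; apply: mxrank_rank1; exact: beam_neq0.
Qed.
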